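(* Let $r\ge2$ be even and let $S=(x_1,x_2,x_3)$ be a sequence in $U(2^r)$ with $x_i\equiv 1\pmod 4$ for $i=1,2,3$ (i.e. its image under $f_{2^r,4}$ is $(1,1,1)$). Then $S$ has no $S(2^r)^*$-weighted zero-sum subsequence.
   Context: For a natural number $m$, $\mathbb Z_m=\mathbb Z/m\mathbb Z$, $U(m)$ its group of units, $S(m)=\{x^2:x\in\mathbb Z_m\}$, $S(m)^*=S(m)\setminus\{0\}$. For $m\mid n$, $f_{n,m}$ is the natural map $\mathbb Z_n\to\mathbb Z_m$. For $A\subseteq\mathbb Z_m$, a sequence $(y_1,\dots,y_k)$ ($k\ge1$) is an $A$-weighted zero-sum sequence if there exist $a_i\in A$ with $\sum a_iy_i=0$; a sequence has an $A$-weighted zero-sum subsequence if some nonempty subsequence is an $A$-weighted zero-sum sequence. *)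

From mathcomp Require Import all_boot all_order all_algebra.
Set Implicit Arguments. Unset Strict Implicit. Unset Printing Implicit Defensive.
Import GRing.Theory.
Local Open Scope ring_scope.

(* Z_m is modelled by 'Z_m; only used for m >= 2 (here m = 2^r, r >= 2). *)

Definition fnm (n m : nat) (x : 'Z_n) : 'Z_m := (nat_of_ord x)%:R.

Definition Ssq (m : nat) : pred 'Z_m := fun a => [exists x : 'Z_m, a == x * x].

Definition Ssq_star (m : nat) : pred 'Z_m := fun a => (a != 0) && Ssq a.

Definition weighted_zero_sum (m : nat) (A : pred 'Z_m) (y : seq 'Z_m) : Prop :=
  (0 < size y)%N /\
  exists a : seq 'Z_m, size a = size y /\ all A a /\
    \sum_(i < size y) a`_i * y`_i = 0.

Definition has_weighted_zero_sum_subseq (m : nat) (A : pred 'Z_m) (y : seq 'Z_m) : Prop :=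
  exists t : seq 'Z_m, subseq t y /\ weighted_zero_sum A t.

(* Write 2^r = 4^h. A nonzero square in Z_(4^h) is the residue of v^2 with
   v = 2^e * o, o odd, so it equals 4^e * o^2 with e < h and o^2 = 1 (mod 4);
   multiplying by an x = 1 (mod 4) keeps this shape.  A weighted sum of at most
   three such terms 4^(e_i) * t_i, t_i = 1 (mod 4), cannot vanish mod 4^h:
   dividing by 4^(min e_i), the quotient is congruent mod 4 to the number of
   indices attaining the minimum, which lies in 1..3. *)

From mathcomp Require Import all_boot all_order all_algebra.
From mathcomp Require Import zify.

Set Implicit Arguments.
Unset Strict Implicit.
Unset Printing Implicit Defensive.

Import GRing.Theory.

Lemma odd_sqr_mod4 o : odd o -> o * o %% 4 = 1.
Proof.
move=> o_odd; rewrite -(odd_double_half o) o_odd -muln2; nia.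
Qed.

Lemma sum_pow4_mod4 k j0 (J T : 'I_k -> nat) :
  (forall i, j0 <= J i) -> (forall i, T i %% 4 = 1) ->
  (\sum_i 4 ^ (J i - j0) * T i) %% 4 = #|[pred i | J i == j0]| %% 4.
Proof.
move=> geJ T1; rewrite -sum1_card [in RHS]big_mkcond /= -modn_summ.
congr (_ %% 4); apply: eq_bigr => i _; rewrite inE.
case: eqP => [->|/eqP neJ]; first by rewrite subnn mul1n T1.
have := geJ i; rewrite leq_eqVlt eq_sym (negbTE neJ) -subn_gt0.
by case: (J i - j0) => // n _; rewrite expnS -mulnA modnMr.
Qed.

Lemma pow4_sum_not_dvd k h (J T : 'I_k -> nat) :
  0 < k <= 3 -> (forall i, J i < h) -> (forall i, T i %% 4 = 1) ->
  ~~ (4 ^ h %| \sum_i 4 ^ J i * T i).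
Proof.
case/andP=> k_gt0 k_le3 ltJh T1.
have [i0 _ minJ] := arg_minnP J (isT : predT (Ordinal k_gt0)).
set j0 := J i0 in minJ *.
have geJ i : j0 <= J i by exact: minJ.
have sumE : \sum_i 4 ^ J i * T i = 4 ^ j0 * \sum_i 4 ^ (J i - j0) * T i.
  rewrite big_distrr; apply: eq_bigr => i _.
  by rewrite /= mulnA -expnD subnKC ?geJ.
have cnt_gt0 : 0 < #|[pred i | J i == j0]| by apply/card_gt0P; exists i0; rewrite inE.
have cnt_le3 : #|[pred i | J i == j0]| <= 3.
  by apply: leq_trans (max_card _) _; rewrite card_ord.
have dvd4 : 4 %| 4 ^ (h - j0) by rewrite -{1}(expn1 4) dvdn_exp2l // subn_gt0 ltJh.
rewrite sumE -(subnKC (ltnW (ltJh i0))) expnD dvdn_pmul2l ?expn_gt0 //.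
by apply/negP => /(dvdn_trans dvd4); rewrite /dvdn sum_pow4_mod4 //; lia.
Qed.

Lemma pow4_gt1 h : 0 < h -> 1 < 4 ^ h.
Proof. by move=> h_gt0; rewrite -{1}(expn0 4) ltn_exp2l. Qed.

Lemma val_Zp_sum_mul m k (F G : 'I_k -> 'Z_m) : 1 < m ->
  (\sum_i F i * G i)%R = (\sum_i F i * G i) %% m :> nat.
Proof.
move=> m_gt1; rewrite -val_Zp_nat // natr_sum.
by congr val; apply: eq_bigr => i _; rewrite natrM !natr_Zp.
Qed.

Lemma nonzero_sqr_Zp_pow4 h (a : 'Z_(4 ^ h)) : 0 < h -> a != 0%R -> Ssq a ->
  exists2 e, e < h & exists2 w, w %% 4 = 1 & a = 4 ^ e * w %[mod 4 ^ h].
Proof.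
move=> h_gt0 a_neq0 /existsP[x /eqP a_sqr].
have m_gt1 := pow4_gt1 h_gt0.
have valE : a = x * x %[mod 4 ^ h].
  by rewrite a_sqr -(natr_Zp x) -natrM val_Zp_nat // natr_Zp modn_mod.
have sqr_ndvd : ~~ (4 ^ h %| x * x).
  apply: contra a_neq0 => dvd; apply/eqP/val_inj.
  have a_mod : a %% 4 ^ h = a by rewrite -{2}(natr_Zp a) val_Zp_nat.
  by rewrite /= -a_mod valE; apply/eqP.
have x_gt0 : 0 < x by rewrite lt0n; apply: contraNneq sqr_ndvd => ->.
have [o o_odd xE] := pfactor_coprime (isT : prime 2) x_gt0.
set e := logn 2 x in xE.
have sqrE : x * x = 4 ^ e * (o * o) by rewrite xE mulnACA -expnMn mulnC.
exists e.
  rewrite ltnNge; apply: contra sqr_ndvd => le_he.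
  by rewrite sqrE dvdn_mulr // dvdn_exp2l.
by exists (o * o); [apply: odd_sqr_mod4; rewrite -coprimen2 coprime_sym | rewrite valE sqrE].
Qed.

Lemma Zp_pow4_no_weighted_zero_sum h (s : seq 'Z_(4 ^ h)) : 0 < h ->
  {in s, forall y : 'Z_(4 ^ h), y %% 4 = 1} -> size s <= 3 ->
  ~ weighted_zero_sum (@Ssq_star _) s.
Proof.
move=> h_gt0 s_mod4 s_le3 [s_gt0 [a [size_a [a_sqr sum0]]]].
have m_gt1 := pow4_gt1 h_gt0.
have term_form (i : 'I_(size s)) : exists p : nat * nat,
    [/\ p.1 < h, p.2 %% 4 = 1 & (a`_i)%R * (s`_i)%R = 4 ^ p.1 * p.2 %[mod 4 ^ h]].
  have /andP[a_neq0 a_sq] : Ssq_star (a`_i)%R by apply: (allP a_sqr); rewrite mem_nth ?size_a.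
  have [e lt_eh [w w_mod4 aE]] := nonzero_sqr_Zp_pow4 h_gt0 a_neq0 a_sq.
  exists (e, w * (s`_i)%R); split=> //=.
    by rewrite -modnMmr s_mod4 ?mem_nth // muln1.
  by rewrite mulnA -modnMml aE modnMml.
have [F F_form] := fin_all_exists term_form.
have sum_dvd : 4 ^ h %| \sum_i 4 ^ (F i).1 * (F i).2.
  rewrite /dvdn -modn_summ (eq_bigr (fun i : 'I_(size s) => (a`_i)%R * (s`_i)%R %% 4 ^ h)).
    by rewrite modn_summ -val_Zp_sum_mul // sum0.
  by move=> i _; case: (F_form i) => _ _ ->.
move: sum_dvd; apply/negP; apply: pow4_sum_not_dvd => [|i|i]; first by rewrite s_gt0.
  by case: (F_form i).
by case: (F_form i).
Qed.

Lemma val_fnm n m (y : 'Z_n) : 1 < m -> fnm m y = y %% m :> nat.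
Proof. by move=> m_gt1; rewrite /fnm val_Zp_nat. Qed.

Local Open Scope ring_scope.

Theorem mainTheorem7 (r : nat) (hr : (2 <= r)%N) (hev : ~~ odd r)
  (x1 x2 x3 : 'Z_(2 ^ r))
  (hu1 : x1 \is a GRing.unit) (hu2 : x2 \is a GRing.unit) (hu3 : x3 \is a GRing.unit)
  (h1 : fnm 4 x1 = 1) (h2 : fnm 4 x2 = 1) (h3 : fnm 4 x3 = 1) :
  ~ has_weighted_zero_sum_subseq (@Ssq_star (2 ^ r)) [:: x1; x2; x3].
Proof.
move=> [t [t_sub t_wzs]].
have t_mod4 : {in t, forall y : 'Z_(2 ^ r), y %% 4 = 1}%N.
  move=> y /(mem_subseq t_sub); rewrite !inE => /or3P[] /eqP ->;
  by rewrite -val_fnm ?(h1, h2, h3).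
have r_halfE : (2 ^ r = 4 ^ r./2)%N.
  by rewrite -[in LHS](odd_double_half r) (negbTE hev) add0n -mul2n expnM.
have {t_sub} t_size : (size t <= 3)%N := size_subseq t_sub.
move: t t_mod4 t_size t_wzs; rewrite r_halfE => t.
by apply: Zp_pow4_no_weighted_zero_sum; rewrite half_gt0.
Qed.
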